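(* $J=J^\epsilon\oplus J^\nu$ for some $\mathbb{F}_p[G]$-submodule $J^\nu$ of $J$, and the index $e$ vanishes on $J^\nu\cap J_{p-1}$. Moreover, for $x\in J_{p-1}$ with decomposition $x=x^\epsilon x^\nu$ ($x^\epsilon\in J^\epsilon$, $x^\nu\in J^\nu$), one has $e(x^\epsilon)=e(x)$.
   Context: $p$ odd prime. $K_0/F_0$ is a cyclic extension of degree $p$ of fields of characteristic $\neq p$; $\xi_p$ is a primitive $p$th root of unity, $F=F_0(\xi_p)$, $K=K_0(\xi_p)$, $s=[F:F_0]$ (prime to $p$), so $\mathrm{Gal}(K/F_0)\cong\mathrm{Gal}(F/F_0)\times\mathrm{Gal}(K_0/F_0)$. Let $\epsilon\in\mathrm{Gal}(K/F_0)$ fix $K_0$ and restrict to a generator of $\mathrm{Gal}(F/F_0)$, and let $\sigma\in\mathrm{Gal}(K/F_0)$ fix $F$ and restrict to a generator of $\mathrm{Gal}(K_0/F_0)$; then $G=\mathrm{Gal}(K/F)=\langle\sigma\rangle$, $\epsilon\sigma=\sigma\epsilon$, and $K=F(\sqrt[p]{a})$ for some $a\in F^\times$ chosen with $\sigma(\sqrt[p]{a})=\xi_p\sqrt[p]{a}$. Let $t\in\mathbb{Z}$ with $\epsilon(\xi_p)=\xi_p^t$. $\rho=\sigma-1$. $J=K^\times/K^{\times p}$ written multiplicatively with exponential Galois action, $J_i=\ker(\rho^i)$, and $J^\epsilon=\{x\in J: \epsilon(x)=x^t\}$ (an $\mathbb{F}_p[G]$-submodule). For $[\gamma]\in J_{p-1}$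 the index $e([\gamma])\in\mathbb{F}_p$ is defined by $\xi_p^{e([\gamma])}=\sigma(\delta)/\delta$ where $\delta\in K$ is any $p$th root of $N_{K/F}(\gamma)$. *)

From HB Require Import structures.
From mathcomp Require Import all_boot all_order all_algebra.
Set Implicit Arguments. Unset Strict Implicit. Unset Printing Implicit Defensive.
Import GRing.Theory.
Local Open Scope ring_scope.

(* Elements of J = K^x / K^{x p} are represented by nonzero elements of K;
   two representatives are identified when their quotient is a p-th power. *)
Section KummerDefs.
Variable K : fieldType.
Variable p : nat.

Definition pthpow (x : K) : Prop := exists y : K, x = y ^+ p.

Definition Jeq (x y : K) : Prop := x != 0 /\ y != 0 /\ pthpow (x / y).

Variable sg : K -> K.  (* the generator sigma of G = Gal(K/F) *)

(* rho = sigma - 1, written multiplicatively: x |-> sigma(x)/x *)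
Definition rho (x : K) : K := sg x / x.

(* x represents an element of J_i = ker(rho^i) *)
Definition Jker (i : nat) (x : K) : Prop := x != 0 /\ pthpow (iter i rho x).

Definition normKF (x : K) : K := \prod_(i < p) iter i sg x.

(* e(x) = k (mod p): some p-th root delta of N_{K/F}(x) has sigma(delta)/delta = xi^k *)
Definition has_index (xi x : K) (k : nat) : Prop :=
  exists delta : K, delta ^+ p = normKF x /\ sg delta = xi ^+ k * delta.

(* P (a predicate on representatives, saturated for Jeq) is an F_p[G]-submodule of J *)
Definition is_FpG_submodule (P : K -> Prop) : Prop :=
  (forall x, P x -> x != 0) /\
  P 1 /\
  (forall x y, P x -> Jeq x y -> P y) /\
  (forall x y, P x -> P y -> P (x * y)) /\
  (forall x, P x -> P x^-1) /\
  (forall x, P x -> P (sg x)).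

End KummerDefs.

(* J^eps = { x in J : eps(x) = x^t } *)
Definition Jeps (K : fieldType) (p : nat) (eps : K -> K) (t : nat) (x : K) : Prop :=
  x != 0 /\ pthpow p (eps x / x ^+ t).

From HB Require Import structures.
From mathcomp Require Import all_boot all_order all_algebra finfield.
Import GRing.Theory.
Local Open Scope ring_scope.

Set Implicit Arguments. Unset Strict Implicit.

(* Write c_j for the residue of s^-1 t^-j mod p. The idempotent (1/s) sum_j t^-j eps^j of
   F_p[<eps>] acts on J as P x = prod_{j<s} eps^j(x)^{c_j}: it is the identity on J^eps, maps
   J into J^eps (because eps^s = 1 and t^s = 1 mod p), and commutes with sigma, rho and
   N_{K/F}. Take J^nu := ker P. Since (sigma - 1)^{p-1} = 1 + sigma + ... + sigma^{p-1}
   mod p, N(z) is a p-th power d^p for z in J_{p-1}, and sigma(d) = zeta d with zeta a p-th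
   root of unity. If moreover P z = v^p, then P(d)^p = N(v)^p, so P(d) is fixed by sigma;
   but sigma(P d) = P(zeta) P(d) = zeta P(d) because P fixes roots of unity
   (sum_j t^j c_j = 1 mod p). Hence zeta = 1 and e(z) = 0. The index is multiplicative
   and kills p-th powers, which gives e(x^eps) = e(x). *)

Section PthPowers.
Variables (K : fieldType) (p : nat).
Implicit Types a b c x y : K.

Lemma pthpow1 : pthpow p (1 : K).
Proof. by exists 1; rewrite expr1n. Qed.

Lemma pthpowM a b : pthpow p a -> pthpow p b -> pthpow p (a * b).
Proof. by move=> [x ->] [y ->]; exists (x * y); rewrite exprMn. Qed.

Lemma pthpowV a : pthpow p a -> pthpow p a^-1.
Proof. by move=> [x ->]; exists x^-1; rewrite exprVn. Qed.

Lemma pthpowX a n : pthpow p a -> pthpow p (a ^+ n).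
Proof. by move=> [x ->]; exists (x ^+ n); rewrite exprAC. Qed.

Lemma pthpow_exprp y : pthpow p (y ^+ p).
Proof. by exists y. Qed.

Lemma JeqI a b : a != 0 -> b != 0 -> pthpow p (a / b) -> Jeq p a b.
Proof. by []. Qed.

Lemma Jeq_refl a : a != 0 -> Jeq p a a.
Proof. by move=> a0; apply: JeqI; rewrite // divff //; apply: pthpow1. Qed.

Lemma Jeq_sym a b : Jeq p a b -> Jeq p b a.
Proof. by move=> [a0 [b0 ab]]; apply: JeqI; rewrite // -invf_div; apply: pthpowV. Qed.

Lemma Jeq_trans a b c : Jeq p a b -> Jeq p b c -> Jeq p a c.
Proof.
move=> [a0 [b0 ab]] [_ [c0 bc]]; apply: JeqI => //.
have -> : a / c = a / b * (b / c) by rewrite mulrA divfK.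
exact: pthpowM.
Qed.

Lemma JeqM a b a' b' : Jeq p a b -> Jeq p a' b' -> Jeq p (a * a') (b * b').
Proof.
move=> [a0 [b0 ab]] [a0' [b0' ab']]; apply: JeqI; rewrite ?mulf_neq0 //.
by rewrite invfM mulrACA; apply: pthpowM.
Qed.

Lemma JeqV a b : Jeq p a b -> Jeq p a^-1 b^-1.
Proof.
move=> [a0 [b0 ab]]; apply: JeqI; rewrite ?invr_eq0 //.
by rewrite -invfM; apply: pthpowV.
Qed.

Lemma JeqX a b n : Jeq p a b -> Jeq p (a ^+ n) (b ^+ n).
Proof.
move=> [a0 [b0 ab]]; apply: JeqI; rewrite ?expf_neq0 //.
by rewrite -expr_div_n; apply: pthpowX.
Qed.

Lemma Jeq_prod (I : Type) (r : seq I) (F G : I -> K) :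
  (forall i, Jeq p (F i) (G i)) -> Jeq p (\prod_(i <- r) F i) (\prod_(i <- r) G i).
Proof.
move=> FG; elim: r => [|i r IHr]; last by rewrite !big_cons; apply: JeqM.
by rewrite !big_nil; apply/Jeq_refl/oner_neq0.
Qed.

Lemma Jeq1 a : Jeq p a 1 <-> a != 0 /\ pthpow p a.
Proof.
rewrite /Jeq divr1 oner_neq0.
by split=> [[? [_ ?]] | [? ?]].
Qed.

Lemma Jeq_pthpow a b : Jeq p a b -> pthpow p b -> pthpow p a.
Proof.
move=> ab pb; have b0 : b != 0 by case: ab => _ [].
by case/Jeq1: (Jeq_trans ab (proj2 (Jeq1 b) (conj b0 pb))).
Qed.

Lemma Jeq_expr_mod a m n : a != 0 -> m = n %[mod p] -> Jeq p (a ^+ m) (a ^+ n).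
Proof.
suff Jmod k : a != 0 -> Jeq p (a ^+ k) (a ^+ (k %% p)).
  by move=> a0 mn; apply: Jeq_trans (Jmod m a0) _; rewrite mn; apply/Jeq_sym/Jmod.
move=> a0; apply: JeqI; rewrite ?expf_neq0 //.
by rewrite {1}(divn_eq k p) exprD mulfK ?expf_neq0 // exprM; apply: pthpow_exprp.
Qed.

End PthPowers.

Section MonoidMorphisms.
Variables (K : fieldType) (p : nat) (f : K -> K).
Hypothesis fM : monoid_morphism f.
Implicit Types a b : K.

Lemma mmorph_neq0 a : a != 0 -> f a != 0.
Proof.
move=> a0; apply/eqP => fa0; have := fM.1.
by rewrite -[X in f X](mulfV a0) fM.2 fa0 mul0r => /eqP; rewrite eq_sym oner_eq0.
Qed.

Lemma mmorphX a n : f (a ^+ n) = f a ^+ n.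
Proof. by elim: n => [|n IHn]; rewrite ?expr0 ?fM.1 // !exprS fM.2 IHn. Qed.

Lemma mmorphV a : a != 0 -> f a^-1 = (f a)^-1.
Proof.
move=> a0; apply: (mulfI (mmorph_neq0 a0)).
by rewrite -fM.2 !mulfV ?fM.1 ?mmorph_neq0.
Qed.

Lemma mmorph_prod (I : Type) (r : seq I) (F : I -> K) :
  f (\prod_(i <- r) F i) = \prod_(i <- r) f (F i).
Proof. exact: (big_morph f fM.2 fM.1). Qed.

Lemma mmorph_pthpow a : pthpow p a -> pthpow p (f a).
Proof. by move=> [y ->]; rewrite mmorphX; apply: pthpow_exprp. Qed.

Lemma mmorph_Jeq a b : Jeq p a b -> Jeq p (f a) (f b).
Proof.
move=> [a0 [b0 ab]]; split; first exact: mmorph_neq0.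
split; first exact: mmorph_neq0.
by rewrite -mmorphV // -fM.2; apply: mmorph_pthpow.
Qed.

End MonoidMorphisms.

Section MonoidMorphismConstructions.
Variable R : comPzSemiRingType.
Implicit Types f g : R -> R.

Lemma iter_monoid_morphism f n : monoid_morphism f -> monoid_morphism (iter n f).
Proof.
move=> [f1 fM]; elim: n => [|n [IH1 IHM]] //; split=> [|x y] /=; first by rewrite IH1.
by rewrite IHM fM.
Qed.

Lemma mul_monoid_morphism f g :
  monoid_morphism f -> monoid_morphism g -> monoid_morphism (fun x => f x * g x).
Proof.
move=> [f1 fM] [g1 gM]; split=> [|x y]; first by rewrite f1 g1 mulr1.
by rewrite fM gM mulrACA.
Qed.

Lemma exp_monoid_morphism f n : monoid_morphism f -> monoid_morphism (fun x => f x ^+ n).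
Proof. by move=> [f1 fM]; split=> [|x y]; rewrite ?f1 ?expr1n // fM exprMn. Qed.

Lemma prod_monoid_morphism (I : Type) (r : seq I) (g : I -> R -> R) :
  (forall i, monoid_morphism (g i)) -> monoid_morphism (fun x => \prod_(i <- r) g i x).
Proof.
move=> gM; split=> [|x y]; first by rewrite big1 // => i _; rewrite (gM i).1.
by rewrite -big_split; apply: eq_bigr => i _; rewrite (gM i).2.
Qed.

End MonoidMorphismConstructions.

Lemma inv_monoid_morphism (K : fieldType) : monoid_morphism (@GRing.inv K).
Proof. by split=> [|x y]; rewrite ?invr1 ?invfM. Qed.

Section PrimeField.
Variable p : nat.
Hypothesis p_prime : prime p.

Lemma natr_Fp_eq_mod m n : m%:R = n%:R :> 'F_p -> m = n %[mod p].
Proof. by move/(congr1 val); rewrite /= !val_Fp_nat. Qed.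

Lemma Jeq_expr_Fp (K : fieldType) (a : K) m n :
  a != 0 -> m%:R = n%:R :> 'F_p -> Jeq p (a ^+ m) (a ^+ n).
Proof. by move=> a0 /natr_Fp_eq_mod; apply: Jeq_expr_mod. Qed.

Lemma natr_pred_Fp : p.-1%:R = -1 :> 'F_p.
Proof.
apply/eqP; rewrite -addr_eq0 -(natrD _ _ 1) addn1 prednK ?prime_gt0 //.
by rewrite pchar_Fp_0.
Qed.

Lemma sign_pred_Fp : (-1) ^+ p.-1 = 1 :> 'F_p.
Proof.
have := expf_card (-1 : 'F_p).
rewrite card_Fp // -[X in _ ^+ X = _](prednK (prime_gt0 p_prime)) exprS mulN1r.
exact: oppr_inj.
Qed.

Lemma binomial_pred_Fp i : (i < p)%N -> 'C(p.-1, i)%:R = (-1) ^+ i :> 'F_p.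
Proof.
elim: i => [|i IHi] ltip; first by rewrite bin0 expr0.
have : 'C(p, i.+1)%:R = 0 :> 'F_p.
  by rewrite -Fp_nat_mod // (eqP (prime_dvd_bin p_prime _)) // ltip.
rewrite -[X in 'C(X, _)](prednK (prime_gt0 p_prime)) binS natrD IHi ?(ltnW ltip) //.
by move/eqP; rewrite addr_eq0 => /eqP ->; rewrite exprS mulN1r.
Qed.

Lemma norm_exponent_Fp i :
  (i < p)%N -> ('C(p.-1, i) * p.-1 ^ (p.-1 - i))%:R = 1 :> 'F_p.
Proof.
move=> ltip; rewrite natrM natrX binomial_pred_Fp // natr_pred_Fp -exprD.
by rewrite subnKC ?sign_pred_Fp // -ltnS prednK ?prime_gt0.
Qed.

Section ProjectionExponents.
Variables t s : nat.
Hypothesis s_coprime : coprime s p.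
Hypothesis t_order : (t%:R : 'F_p) ^+ s = 1.

Definition proj_eps_exp (j : nat) : nat := nat_of_ord (s%:R^-1 * (t%:R^-1) ^+ j : 'F_p).

Lemma natr_proj_eps_exp j : (proj_eps_exp j)%:R = s%:R^-1 * (t%:R^-1) ^+ j :> 'F_p.
Proof. exact: natr_Zp. Qed.

Lemma t_Fp_neq0 : (t%:R : 'F_p) != 0.
Proof.
have s_gt0 : (0 < s)%N.
  by move: s_coprime p_prime; case: s => //; rewrite /coprime gcd0n => /eqP ->.
by rewrite -unitfE -(unitrX_pos _ s_gt0) t_order unitr1.
Qed.

Lemma proj_eps_expS j : (proj_eps_exp j)%:R = (t * proj_eps_exp j.+1)%:R :> 'F_p.
Proof.
by rewrite natrM !natr_proj_eps_exp exprS mulrCA mulVKf ?t_Fp_neq0.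
Qed.

Lemma proj_eps_exp_period : proj_eps_exp s = proj_eps_exp 0.
Proof. by rewrite /proj_eps_exp exprVn t_order invr1 expr0. Qed.

Lemma sum_proj_eps_exp : (\sum_(j < s) t ^ j * proj_eps_exp j)%:R = 1 :> 'F_p.
Proof.
rewrite natr_sum (eq_bigr (fun _ => s%:R^-1)) => [|j _]; last first.
  by rewrite natrM natrX natr_proj_eps_exp mulrCA -exprMn divff ?t_Fp_neq0 // expr1n mulr1.
by rewrite sumr_const card_ord -[_ *+ s]mulr_natr mulVf // -unitfE unitFpE // coprime_sym.
Qed.

End ProjectionExponents.
End PrimeField.

Lemma big_ord_cycle (R : Type) (idx : R) (op : Monoid.com_law idx) n (F : nat -> R) :
  F n = F 0 -> \big[op/idx]_(j < n) F j.+1 = \big[op/idx]_(j < n) F j.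
Proof.
case: n => [|n] Fn; first by rewrite !big_ord0.
by rewrite big_ord_recr big_ord_recl /= Fn Monoid.mulmC.
Qed.

Lemma iter_commute (T : Type) (f g : T -> T) n :
  (forall x, f (g x) = g (f x)) -> forall x, iter n f (g x) = g (iter n f x).
Proof. by move=> fg; elim: n => [|n IHn] x //=; rewrite IHn fg. Qed.

Section NormAndIndex.
Variables (K : fieldType) (p : nat) (sg : {rmorphism K -> K}) (xi : K).
Hypothesis p_prime : prime p.
Hypothesis sg_order : forall x, iter p sg x = x.
Implicit Types a b w x y z : K.

Lemma iter_sg_monoid_morphism i : monoid_morphism (iter i sg).
Proof. exact/iter_monoid_morphism/rmorphism_monoidP. Qed.

Lemma rho_monoid_morphism : monoid_morphism (rho sg).
Proof. exact: (mul_monoid_morphism (rmorphism_monoidP sg) (@inv_monoid_morphism K)). Qed.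

Lemma normKF_monoid_morphism : monoid_morphism (normKF p sg).
Proof. exact: prod_monoid_morphism (fun i : 'I_p => iter_sg_monoid_morphism i). Qed.

Lemma sg_normKF x : sg (normKF p sg x) = normKF p sg x.
Proof. by rewrite rmorph_prod; apply: (big_ord_cycle _ (F := fun i => iter i sg x)). Qed.

(* A representative of rho with the exponent -1 replaced by p - 1, so that its iterates
   have an exact binomial expansion with natural exponents. *)
Definition rho_pos y := sg y * y ^+ p.-1.

Lemma rho_pos_monoid_morphism : monoid_morphism rho_pos.
Proof.
exact: (mul_monoid_morphism (rmorphism_monoidP sg)
          (exp_monoid_morphism p.-1 (GRing.idfun_is_monoid_morphism K))).
Qed.

Lemma rho_Jeq_rho_pos y : y != 0 -> Jeq p (rho sg y) (rho_pos y).
Proof.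
move=> y0; have sy0 : sg y != 0 by rewrite fmorph_eq0.
apply: JeqI; rewrite ?mulf_neq0 ?invr_eq0 ?expf_neq0 //.
exists y^-1; rewrite -[in RHS](prednK (prime_gt0 p_prime)) exprS exprVn.
by rewrite /rho /rho_pos invfM mulrACA mulfV // mul1r.
Qed.

Lemma iter_rho_Jeq_rho_pos n x : x != 0 -> Jeq p (iter n (rho sg) x) (iter n rho_pos x).
Proof.
move=> x0; elim: n => [|n IHn] /=; first exact: Jeq_refl.
apply: Jeq_trans (mmorph_Jeq rho_monoid_morphism IHn) _.
exact/rho_Jeq_rho_pos/(mmorph_neq0 (iter_monoid_morphism n rho_pos_monoid_morphism)).
Qed.

Lemma iter_rho_pos n x :
  iter n rho_pos x = \prod_(0 <= i < n.+1) iter i sg x ^+ ('C(n, i) * p.-1 ^ (n - i)).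
Proof.
elim: n => [|n IHn]; first by rewrite big_nat1 /= bin0 subnn expn0 muln1 expr1.
rewrite iterS IHn /rho_pos (big_nat_recl n.+1) //.
set q := p.-1.
have -> : \prod_(0 <= i < n.+1) iter i.+1 sg x ^+ ('C(n.+1, i.+1) * q ^ (n.+1 - i.+1)) =
  \prod_(0 <= i < n.+1) iter i.+1 sg x ^+ ('C(n, i.+1) * q ^ (n - i)) *
  \prod_(0 <= i < n.+1) iter i.+1 sg x ^+ ('C(n, i) * q ^ (n - i)).
  by rewrite -big_split; apply: eq_bigr => i _; rewrite binS subSS mulnDl exprD.
rewrite [RHS]mulrA [RHS]mulrC; congr (_ * _).
  by rewrite rmorph_prod; apply: eq_bigr => i _; rewrite rmorphXn.
rewrite -prodrXl (big_nat_recl n) // (big_nat_recr n) //= (bin_small (ltnSn n)).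
rewrite expr0 mulr1 -!exprM.
congr (_ * _); first by rewrite bin0 !mul1n subn0 expnSr.
apply: eq_big_nat => i /andP[_ ltin]; rewrite -exprM -mulnA -expnSr subnSK //.
Qed.

Lemma normKF_Jeq_iter_rho x : x != 0 -> Jeq p (normKF p sg x) (iter p.-1 (rho sg) x).
Proof.
move=> x0; apply: Jeq_trans (Jeq_sym (iter_rho_Jeq_rho_pos _ x0)).
rewrite iter_rho_pos prednK ?prime_gt0 // big_mkord.
apply: Jeq_prod => i; rewrite -{1}(expr1 (iter i sg x)).
apply: (Jeq_expr_Fp p_prime); first exact: (mmorph_neq0 (iter_sg_monoid_morphism i)).
exact/esym/norm_exponent_Fp.
Qed.

Lemma Jker_normKF_pthpow z : Jker p sg p.-1 z -> pthpow p (normKF p sg z).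
Proof. by move=> [z0 hz]; apply: Jeq_pthpow hz; apply: normKF_Jeq_iter_rho. Qed.

Lemma iter_rho_monoid_morphism n : monoid_morphism (iter n (rho sg)).
Proof. exact/iter_monoid_morphism/rho_monoid_morphism. Qed.

Lemma Jker_Jeq n a b : Jeq p a b -> Jker p sg n a -> Jker p sg n b.
Proof.
move=> ab [a0 ha]; split; first by case: ab => _ [].
by apply: Jeq_pthpow ha; apply/Jeq_sym/(mmorph_Jeq (iter_rho_monoid_morphism n)).
Qed.

Lemma JkerM n a b : Jker p sg n a -> Jker p sg n b -> Jker p sg n (a * b).
Proof.
move=> [a0 ha] [b0 hb]; split; first by rewrite mulf_neq0.
by rewrite (iter_rho_monoid_morphism n).2; apply: pthpowM.
Qed.

Lemma JkerV n a : Jker p sg n a -> Jker p sg n a^-1.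
Proof.
move=> [a0 ha]; split; first by rewrite invr_eq0.
by rewrite (mmorphV (iter_rho_monoid_morphism n)) //; apply: pthpowV.
Qed.

Lemma has_indexM y z k m :
  has_index p sg xi y k -> has_index p sg xi z m -> has_index p sg xi (y * z) (k + m).
Proof.
move=> [dy [dyp sdy]] [dz [dzp sdz]]; exists (dy * dz); split.
  by rewrite exprMn dyp dzp normKF_monoid_morphism.2.
by rewrite rmorphM sdy sdz exprD mulrACA.
Qed.

Lemma has_index_exprp w : has_index p sg xi (w ^+ p) 0.
Proof.
exists (normKF p sg w); split; first by rewrite (mmorphX normKF_monoid_morphism).
by rewrite sg_normKF expr0 mul1r.
Qed.

Lemma has_index_mul0 y z k : z != 0 -> has_index p sg xi z 0 ->
  has_index p sg xi (y * z) k <-> has_index p sg xi y k.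
Proof.
move=> z0 hz; split; last by move/has_indexM/(_ hz); rewrite addn0.
move: hz => [dz [dzp sdz]] [d [dp sd]].
have Nz0 : normKF p sg z != 0 := mmorph_neq0 normKF_monoid_morphism z0.
have dz0 : dz != 0 by move: Nz0; rewrite -dzp expf_eq0 prime_gt0.
exists (d / dz); split.
  by rewrite expr_div_n dp dzp normKF_monoid_morphism.2 mulfK.
by rewrite rmorphM fmorphV sd sdz expr0 mul1r mulrA.
Qed.

Lemma has_index_Jeq a b k : Jeq p a b -> has_index p sg xi a k <-> has_index p sg xi b k.
Proof.
move=> [a0 [b0 [w abw]]].
have wp0 : w ^+ p != 0 by rewrite -abw mulf_neq0 ?invr_eq0.
by have := has_index_mul0 b k wp0 (has_index_exprp w); rewrite -abw mulrC divfK.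
Qed.

End NormAndIndex.

Section EpsProjection.
Variables (K : fieldType) (p t s : nat) (sg eps : {rmorphism K -> K}) (xi : K).
Hypothesis p_prime : prime p.
Hypothesis s_coprime : coprime s p.
Hypothesis sg_eps : forall x, sg (eps x) = eps (sg x).
Hypothesis sg_order : forall x, iter p sg x = x.
Hypothesis eps_order : forall x, iter s eps x = x.
Hypothesis xi_prim : p.-primitive_root xi.
Hypothesis sg_xi : sg xi = xi.
Hypothesis eps_xi : eps xi = xi ^+ t.
Implicit Types a b d v x y z : K.

Lemma iter_eps_xi j : iter j eps xi = xi ^+ (t ^ j).
Proof. by elim: j => [|j IHj] /=; rewrite ?expr1 // IHj rmorphXn eps_xi -exprM expnS. Qed.

Lemma t_order_Fp : (t%:R : 'F_p) ^+ s = 1.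
Proof.
have ts : t ^ s = 1 %[mod p].
  by apply/eqP; rewrite -(eq_prim_root_expr xi_prim) -iter_eps_xi eps_order expr1.
by rewrite -natrX -Fp_nat_mod // ts Fp_nat_mod.
Qed.

Local Notation c := (proj_eps_exp p t s).

Definition proj_eps x := \prod_(j < s) iter j eps x ^+ c j.

Lemma iter_eps_monoid_morphism j : monoid_morphism (iter j eps).
Proof. exact/iter_monoid_morphism/rmorphism_monoidP. Qed.

Lemma proj_eps_monoid_morphism : monoid_morphism proj_eps.
Proof.
apply: prod_monoid_morphism => j.
exact/exp_monoid_morphism/iter_eps_monoid_morphism.
Qed.

Lemma proj_eps_neq0 x : x != 0 -> proj_eps x != 0.
Proof. exact: (mmorph_neq0 proj_eps_monoid_morphism). Qed.

Lemma JepsE y : Jeps p eps t y <-> Jeq p (eps y) (y ^+ t).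
Proof.
rewrite /Jeps /Jeq fmorph_eq0; split=> [[y0 hy] | [y0 [_ hy]]] //.
by rewrite expf_neq0.
Qed.

Lemma proj_eps_Jeps x : x != 0 -> Jeps p eps t (proj_eps x).
Proof.
move=> x0; apply/JepsE; rewrite rmorph_prod.
apply: Jeq_trans (_ : Jeq p _ (\prod_(j < s) (iter j.+1 eps x ^+ c j.+1) ^+ t)) _.
  apply: Jeq_prod => j; rewrite rmorphXn -exprM mulnC.
  apply: (Jeq_expr_Fp p_prime); first exact: (mmorph_neq0 (iter_eps_monoid_morphism j.+1)).
  exact: proj_eps_expS t_order_Fp j.
rewrite prodrXl (big_ord_cycle _ (F := fun j => iter j eps x ^+ c j)).
  exact/Jeq_refl/expf_neq0/proj_eps_neq0.
by rewrite /= eps_order proj_eps_exp_period ?t_order_Fp.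
Qed.

Lemma iter_eps_Jeps y j : Jeps p eps t y -> Jeq p (iter j eps y) (y ^+ (t ^ j)).
Proof.
move=> /JepsE eps_y; have y0 : y != 0 by case: eps_y; rewrite fmorph_eq0.
elim: j => [|j IHj] /=; first by rewrite expr1; apply: Jeq_refl.
apply: Jeq_trans (mmorph_Jeq (rmorphism_monoidP eps) IHj) _.
by rewrite rmorphXn expnS exprM; apply: JeqX.
Qed.

Lemma proj_eps_id y : Jeps p eps t y -> Jeq p (proj_eps y) y.
Proof.
move=> hy; have y0 : y != 0 by case: hy.
apply: Jeq_trans (_ : Jeq p _ (\prod_(j < s) y ^+ (t ^ j * c j))) _.
  by apply: Jeq_prod => j; rewrite exprM; apply/JeqX/iter_eps_Jeps.
rewrite prodrXr -[X in Jeq p _ X]expr1; apply: (Jeq_expr_Fp p_prime y0).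
exact: sum_proj_eps_exp t_order_Fp.
Qed.

Lemma root1_expr_xi z : z ^+ p = 1 -> exists k, z = xi ^+ k.
Proof. by move/(prim_rootP xi_prim) => [k ->]; exists k. Qed.

Lemma sg_root1 z : z ^+ p = 1 -> sg z = z.
Proof. by move/root1_expr_xi => [k ->]; rewrite rmorphXn sg_xi. Qed.

Lemma proj_eps_root1 z : z ^+ p = 1 -> proj_eps z = z.
Proof.
move=> zp; have [k zk] := root1_expr_xi zp.
have iter_eps_z j : iter j eps z = z ^+ (t ^ j).
  by rewrite zk (mmorphX (iter_eps_monoid_morphism j)) iter_eps_xi exprAC.
rewrite /proj_eps (eq_bigr (fun j : 'I_s => z ^+ (t ^ j * c j))) => [|j _]; last first.
  by rewrite iter_eps_z exprM.
have sum1 := sum_proj_eps_exp p_prime s_coprime t_order_Fp.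
by rewrite prodrXr -(expr_mod _ zp) (natr_Fp_eq_mod (n := 1) p_prime sum1) expr_mod ?expr1.
Qed.

Lemma proj_eps_commute h : monoid_morphism h -> (forall x, h (eps x) = eps (h x)) ->
  forall x, h (proj_eps x) = proj_eps (h x).
Proof.
move=> hM h_eps x; rewrite (mmorph_prod hM); apply: eq_bigr => j _.
by rewrite (mmorphX hM) (iter_commute _ (fun y => esym (h_eps y))).
Qed.

Lemma rho_eps x : rho sg (eps x) = eps (rho sg x).
Proof. by rewrite /rho rmorphM fmorphV sg_eps. Qed.

Lemma normKF_eps x : normKF p sg (eps x) = eps (normKF p sg x).
Proof.
rewrite rmorph_prod; apply: eq_bigr => i _.
by rewrite (iter_commute _ sg_eps).
Qed.

Lemma proj_eps_sg x : sg (proj_eps x) = proj_eps (sg x).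
Proof. exact: proj_eps_commute (rmorphism_monoidP sg) sg_eps x. Qed.

Lemma normKF_proj_eps x : normKF p sg (proj_eps x) = proj_eps (normKF p sg x).
Proof. exact: proj_eps_commute (normKF_monoid_morphism p sg) normKF_eps x. Qed.

Lemma Jker_proj_eps n x : Jker p sg n x -> Jker p sg n (proj_eps x).
Proof.
move=> [x0 hx]; split; first exact: proj_eps_neq0.
rewrite (proj_eps_commute (iter_rho_monoid_morphism sg n)).
  exact: mmorph_pthpow proj_eps_monoid_morphism _ hx.
exact: iter_commute rho_eps.
Qed.

Lemma sg_fixed_exprp a b : b != 0 -> a ^+ p = b ^+ p -> sg b = b -> sg a = a.
Proof.
move=> b0 ab sgb.
have : sg (a / b) = a / b by rewrite sg_root1 // expr_div_n ab divff ?expf_neq0.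
by rewrite rmorphM fmorphV sgb => /(mulIf (invr_neq0 b0)).
Qed.

Definition ker_proj_eps x := x != 0 /\ pthpow p (proj_eps x).

Lemma ker_proj_eps_index0 z :
  ker_proj_eps z -> Jker p sg p.-1 z -> has_index p sg xi z 0.
Proof.
move=> [z0 [v Pzv]] /(Jker_normKF_pthpow p_prime) [d Nzd].
have Nz0 : normKF p sg z != 0 := mmorph_neq0 (normKF_monoid_morphism p sg) z0.
have d0 : d != 0 by move: Nz0; rewrite Nzd expf_eq0 prime_gt0.
have v0 : v != 0 by move: (proj_eps_neq0 z0); rewrite Pzv expf_eq0 prime_gt0.
set zeta := sg d / d.
have zeta_p : zeta ^+ p = 1 by rewrite expr_div_n -rmorphXn -Nzd sg_normKF // divff.
have sg_Pd : sg (proj_eps d) = proj_eps d.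
  apply: (sg_fixed_exprp (b := normKF p sg v)); last exact: sg_normKF.
    exact: mmorph_neq0 (normKF_monoid_morphism p sg) _ v0.
  rewrite -(mmorphX proj_eps_monoid_morphism) -Nzd -normKF_proj_eps Pzv.
  by rewrite (mmorphX (normKF_monoid_morphism p sg)).
have : sg (proj_eps d) = zeta * proj_eps d.
  by rewrite proj_eps_sg -[sg d](divfK d0) proj_eps_monoid_morphism.2 proj_eps_root1.
rewrite sg_Pd -{1}[proj_eps d]mul1r => /(mulIf (proj_eps_neq0 d0)) zeta1.
by exists d; split; rewrite // expr0 mul1r -[sg d](divfK d0) -/zeta -zeta1 mul1r.
Qed.

Lemma ker_proj_eps_submodule : is_FpG_submodule p sg ker_proj_eps.
Proof.
have PM := proj_eps_monoid_morphism.
split; first by move=> x [].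
split; first by split; [exact: oner_neq0 | rewrite PM.1; exact: pthpow1].
split.
  move=> x y [x0 hx] xy; split; first by case: xy => _ [].
  exact: Jeq_pthpow (mmorph_Jeq PM (Jeq_sym xy)) hx.
split.
  move=> x y [x0 hx] [y0 hy]; split; first by rewrite mulf_neq0.
  by rewrite PM.2; apply: pthpowM.
split.
  move=> x [x0 hx]; split; first by rewrite invr_eq0.
  by rewrite (mmorphV PM) //; apply: pthpowV.
move=> x [x0 hx]; split; first by rewrite fmorph_eq0.
by rewrite -proj_eps_sg; apply: (mmorph_pthpow (rmorphism_monoidP sg)).
Qed.

Lemma Jeps_ker_decomposition x : x != 0 ->
  exists y z, Jeps p eps t y /\ ker_proj_eps z /\ Jeq p x (y * z).
Proof.
move=> x0; have Px0 := proj_eps_neq0 x0.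
exists (proj_eps x), (x / proj_eps x); split; first exact: proj_eps_Jeps.
split; last by rewrite mulrC divfK //; apply: Jeq_refl.
split; first by rewrite mulf_neq0 ?invr_eq0.
rewrite proj_eps_monoid_morphism.2 (mmorphV proj_eps_monoid_morphism) //.
have := JeqM (Jeq_refl p Px0) (JeqV (proj_eps_id (proj_eps_Jeps x0))).
by rewrite mulfV // => /Jeq1 [].
Qed.

Lemma Jeps_ker_trivial y : Jeps p eps t y -> ker_proj_eps y -> pthpow p y.
Proof. by move=> hy [_ hPy]; apply: Jeq_pthpow hPy; apply/Jeq_sym/proj_eps_id. Qed.

Lemma Jeps_component_index x y z :
  Jker p sg p.-1 x -> Jeps p eps t y -> ker_proj_eps z -> Jeq p x (y * z) ->
  Jker p sg p.-1 y /\ (forall k, has_index p sg xi y k <-> has_index p sg xi x k).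
Proof.
move=> hx hy [z0 hz] xyz; have y0 : y != 0 by case: hy.
have PM := proj_eps_monoid_morphism.
have Px_y : Jeq p (proj_eps x) y.
  have Pz1 : Jeq p (proj_eps z) 1 by apply/Jeq1; split; first exact: proj_eps_neq0.
  apply: Jeq_trans (mmorph_Jeq PM xyz) _; rewrite PM.2 -[X in Jeq p _ X]mulr1.
  exact: JeqM (proj_eps_id hy) Pz1.
have hy' : Jker p sg p.-1 y := Jker_Jeq Px_y (Jker_proj_eps hx).
have hz' : Jker p sg p.-1 z.
  apply: Jker_Jeq (JkerM hx (JkerV hy')).
  by have := JeqM xyz (Jeq_refl p (invr_neq0 y0)); rewrite mulrAC mulfV // mul1r.
have z_index0 := ker_proj_eps_index0 (conj z0 hz) hz'.
split=> // k; apply: iff_sym; apply: (iff_trans _ (has_index_mul0 p_prime y k z0 z_index0)).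
exact: has_index_Jeq.
Qed.

Lemma Jeps_direct_complement :
  exists Jnu : K -> Prop,
    is_FpG_submodule p sg Jnu /\
    (forall x, x != 0 -> exists y z, Jeps p eps t y /\ Jnu z /\ Jeq p x (y * z)) /\
    (forall y, Jeps p eps t y -> Jnu y -> pthpow p y) /\
    (forall x, Jnu x -> Jker p sg p.-1 x -> has_index p sg xi x 0) /\
    (forall x y z, Jker p sg p.-1 x -> Jeps p eps t y -> Jnu z -> Jeq p x (y * z) ->
       Jker p sg p.-1 y /\
       (forall k, has_index p sg xi y k <-> has_index p sg xi x k)).
Proof.
exists ker_proj_eps; split; first exact: ker_proj_eps_submodule.
split; first exact: Jeps_ker_decomposition.
split; first exact: Jeps_ker_trivial.
split; first exact: ker_proj_eps_index0.
exact: Jeps_component_index.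
Qed.

End EpsProjection.

Theorem lemma7 (p : nat) (K : fieldType) (s t : nat)
    (sg eps : {rmorphism K -> K}) (xi alpha : K) :
  prime p -> odd p -> (p%:R : K) != 0 ->
  (* sigma, eps are commuting automorphisms of K *)
  bijective sg -> bijective eps -> (forall x, sg (eps x) = eps (sg x)) ->
  (* sigma generates G = Gal(K/F), cyclic of order p, F = Fix(sigma) *)
  (forall x, iter p sg x = x) -> (exists x, sg x != x) ->
  (* eps has order s, prime to p, and restricts to a generator of Gal(F/F0),
     F0 = Fix<sigma, eps>, K0 = Fix(eps) *)
  (0 < s)%N -> coprime s p -> (forall x, iter s eps x = x) ->
  (forall k, (0 < k < s)%N -> exists y, sg y = y /\ iter k eps y != y) ->
  (* xi primitive p-th root of unity in F, eps(xi) = xi^t *)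
  p.-primitive_root xi -> sg xi = xi -> eps xi = xi ^+ t ->
  (* F = F0(xi) *)
  (forall y, sg y = y -> exists c : 'I_p -> K,
       (forall i, sg (c i) = c i /\ eps (c i) = c i) /\
       y = \sum_(i < p) c i * xi ^+ i) ->
  (* K = F(alpha), alpha = a^(1/p), a in F, sigma(alpha) = xi alpha *)
  alpha != 0 -> sg (alpha ^+ p) = alpha ^+ p -> sg alpha = xi * alpha ->
  (forall y, exists c : 'I_p -> K,
       (forall i, sg (c i) = c i) /\ y = \sum_(i < p) c i * alpha ^+ i) ->
  exists Jnu : K -> Prop,
    is_FpG_submodule p sg Jnu /\
    (* J = J^eps (+) J^nu *)
    (forall x, x != 0 -> exists y z, Jeps p eps t y /\ Jnu z /\ Jeq p x (y * z)) /\
    (forall y, Jeps p eps t y -> Jnu y -> pthpow p y) /\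
    (* e vanishes on J^nu /\ J_{p-1} *)
    (forall x, Jnu x -> Jker p sg p.-1 x -> has_index p sg xi x 0) /\
    (* e(x^eps) = e(x) *)
    (forall x y z, Jker p sg p.-1 x -> Jeps p eps t y -> Jnu z -> Jeq p x (y * z) ->
       Jker p sg p.-1 y /\
       (forall k, has_index p sg xi y k <-> has_index p sg xi x k)).
Proof.
(* Only the relations between sigma, eps and xi enter; the argument never uses that p is
   odd, that K has characteristic prime to p, or that alpha and xi generate. *)
move=> p_prime _ _ _ _ sg_eps sg_order _ _ s_coprime eps_order _ xi_prim sg_xi eps_xi.
move=> _ _ _ _ _.
exact: (Jeps_direct_complement p_prime s_coprime sg_eps sg_order eps_order
          xi_prim sg_xi eps_xi).
Qed.
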